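(* If $n\ge 1$ is odd, then $a_{2(2)}(n)=b_2(2n+1,n+1)$. More generally, let $m,\ell\geq 2$ and let $n\ge1$ be not divisible by $\ell$, with $n=\ell k+r$ for integers $k$ and $1\leq r<\ell$. Then \[a_{m(\ell)}(n)=a_{(m-1)(\ell)}(2n+\ell-r,\,n+\ell-r).\]
   Context: An $\ell$-regular partition is a partition with no part divisible by $\ell$. $a_{m(\ell)}(n)$ is the number of $\ell$-regular partitions of $n$ in which the smallest part occurs at least $m$ times. $a_{m(\ell)}(N,j)$ is the number of $\ell$-regular partitions of $N$ in which the smallest part occurs at least $m$ times and the largest part minus the smallest part equals $j$. $b_\ell(N,j)$ is the number of $\ell$-regular partitions of $N$ in which the largest part minus the smallest part equals $j$. *)

(* Partitions of N are encoded by their multiplicity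
   functions: f i = number of times the part i occurs (0 <= i <= N). *)
From mathcomp Require Import all_boot.
Set Implicit Arguments. Unset Strict Implicit. Unset Printing Implicit Defensive.

Definition mpart (N : nat) := {ffun 'I_N.+1 -> 'I_N.+1}.

Definition is_partition (N : nat) (f : mpart N) : bool :=
  (f ord0 == 0 :> nat) && (\sum_(i < N.+1) i * f i == N).

Definition regular (l N : nat) (f : mpart N) : bool :=
  [forall i : 'I_N.+1, (0 < f i) ==> ~~ (l %| i)].

Definition is_smallest (N : nat) (f : mpart N) (s : 'I_N.+1) : bool :=
  (0 < f s) && [forall i : 'I_N.+1, (i < s) ==> (f i == 0 :> nat)].

Definition is_largest (N : nat) (f : mpart N) (t : 'I_N.+1) : bool :=
  (0 < f t) && [forall i : 'I_N.+1, (t < i) ==> (f i == 0 :> nat)].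

Definition smallest_mult_ge (m N : nat) (f : mpart N) : bool :=
  [exists s : 'I_N.+1, is_smallest f s && (m <= f s)].

Definition spread_eq (j N : nat) (f : mpart N) : bool :=
  [exists s : 'I_N.+1, exists t : 'I_N.+1,
     [&& is_smallest f s, is_largest f t & (t - s == j)]].

Definition a_ml (m l n : nat) : nat :=
  #|[set f : mpart n | [&& is_partition f, regular l f & smallest_mult_ge m f]]|.

Definition a_ml2 (m l N j : nat) : nat :=
  #|[set f : mpart N | [&& is_partition f, regular l f, smallest_mult_ge m f
                         & spread_eq j f]]|.

Definition b_l (l N j : nat) : nat :=
  #|[set f : mpart N | [&& is_partition f, regular l f & spread_eq j f]]|.

(* Let L = n + l - r, the least multiple of l exceeding n. Replacing one copy
   of the smallest part s of a partition of n by s + L yields a partition of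
   n + L. Since every part is at most n < L and s occurred at least twice, s
   is still the smallest part and s + L is the unique largest one, so the
   spread is exactly L; s + L is l-regular because s is. Conversely, replacing
   one copy of the largest part s + L by s undoes this. For l = m = 2 and n odd
   we have r = 1, and a multiplicity of at least 1 is no condition. *)
From mathcomp Require Import all_boot zify.
Set Implicit Arguments. Unset Strict Implicit. Unset Printing Implicit Defensive.

Definition smallest_part (F : nat -> nat) (s : nat) : Prop :=
  0 < F s /\ forall i, i < s -> F i = 0.

Definition largest_part (F : nat -> nat) (t : nat) : Prop :=
  0 < F t /\ forall i, t < i -> F i = 0.

Definition weight (B : nat) (F : nat -> nat) : nat := \sum_(i < B) i * F i.

Lemma smallest_part_uniq F s s' : smallest_part F s -> smallest_part F s' -> s = s'.
Proof.
move=> [Fs min_s] [Fs' min_s']; case: (ltngtP s s') => // lt_ss'.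
  by rewrite min_s' in Fs.
by rewrite min_s in Fs'.
Qed.

Lemma eq_smallest_part F G s : F =1 G -> smallest_part F s -> smallest_part G s.
Proof. by move=> FG [Fs min_s]; split=> [|i lt_is]; rewrite -FG //; exact: min_s. Qed.

Lemma eq_largest_part F G t : F =1 G -> largest_part F t -> largest_part G t.
Proof. by move=> FG [Ft max_t]; split=> [|i lt_ti]; rewrite -FG //; exact: max_t. Qed.

Lemma eq_weight B F G : F =1 G -> weight B F = weight B G.
Proof. by move=> FG; apply: eq_bigr => i _; rewrite FG. Qed.

Lemma weight_widen B M F : (forall i, M < i -> F i = 0) -> M < B ->
  weight B F = weight M.+1 F.
Proof.
move=> F_out lt_MB; rewrite /weight (big_ord_widen B (fun i => i * F i) lt_MB).
rewrite [RHS]big_mkcond; apply: eq_bigr => i _ /=.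
by case: leqP => // /F_out ->; rewrite muln0.
Qed.

Lemma weight_indicator B c : c < B -> weight B (fun i => i == c) = c.
Proof.
move=> lt_cB; rewrite /weight (bigD1 (Ordinal lt_cB)) //= eqxx muln1.
rewrite big1 ?addn0 // => i neq_ic.
suff /negbTE -> : nat_of_ord i != c by rewrite muln0.
by apply: contra neq_ic => /eqP eq_ic; apply/eqP/val_inj.
Qed.

Lemma term_le_weight B F i : (forall j, B <= j -> F j = 0) -> i * F i <= weight B F.
Proof.
move=> F_out; case: (ltnP i B) => [lt_iB | /F_out ->]; last by rewrite muln0.
by rewrite /weight (bigD1 (Ordinal lt_iB)) //= leq_addr.
Qed.

Definition move_part (F : nat -> nat) (a b : nat) (i : nat) : nat :=
  F i - (i == a) + (i == b).

Lemma move_part_le F a b i : move_part F a b i <= (F i).+1.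
Proof. by rewrite /move_part; case: eqP; case: eqP => /=; lia. Qed.

Lemma move_part_id F a b i : i != a -> i != b -> move_part F a b i = F i.
Proof. by rewrite /move_part => /negbTE -> /negbTE ->; rewrite subn0 addn0. Qed.

Lemma move_part_src F a b : a != b -> move_part F a b a = (F a).-1.
Proof. by rewrite /move_part eqxx => /negbTE ->; rewrite subn1 addn0. Qed.

Lemma move_part_dst F a b : a != b -> move_part F a b b = (F b).+1.
Proof. by rewrite /move_part eq_sym eqxx => /negbTE ->; rewrite subn0 addn1. Qed.

Lemma move_part_gt0 F a b i : 0 < move_part F a b i -> i = b \/ 0 < F i.
Proof. by rewrite /move_part; case: eqP; case: eqP => /=; try lia; left. Qed.

Lemma move_partK F a b : 0 < F a -> move_part (move_part F a b) b a =1 F.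
Proof.
by rewrite /move_part => Fa i; case: (eqVneq i a) => [->|]; case: eqP => /=; lia.
Qed.

Lemma weight_move_part B F a b : 0 < F a -> a < B -> b < B ->
  weight B (move_part F a b) + a = weight B F + b.
Proof.
move=> Fa lt_aB lt_bB.
rewrite -[X in _ + X = _](weight_indicator lt_aB).
rewrite -[X in _ = _ + X](weight_indicator lt_bB) /weight -!big_split /=.
apply: eq_bigr => i _; rewrite -!mulnDr /move_part; congr (_ * _).
by case: (eqVneq (val i) a) => [->|]; case: eqP => /=; lia.
Qed.

Lemma smallest_part_move_up F s b : smallest_part F s -> 1 < F s -> s < b ->
  smallest_part (move_part F s b) s.
Proof.
move=> [_ min_s] Fs lt_sb; have neq_sb : s != b by rewrite neq_ltn lt_sb.
split=> [|i lt_is]; first by rewrite move_part_src //; lia.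
by rewrite move_part_id ?min_s // neq_ltn ?lt_is ?(ltn_trans lt_is lt_sb).
Qed.

Lemma smallest_part_move_down F s a : smallest_part F s -> s < a ->
  smallest_part (move_part F a s) s.
Proof.
move=> [_ min_s] lt_sa; have neq_as : a != s by rewrite neq_ltn lt_sa orbT.
split=> [|i lt_is]; first by rewrite move_part_dst.
by rewrite move_part_id ?min_s // neq_ltn ?lt_is ?(ltn_trans lt_is lt_sa).
Qed.

Lemma largest_part_move_up F M a b : (forall i, M < i -> F i = 0) -> a < b -> M < b ->
  largest_part (move_part F a b) b.
Proof.
move=> F_out lt_ab lt_Mb; have neq_ab : a != b by rewrite neq_ltn lt_ab.
split=> [|i lt_bi]; first by rewrite move_part_dst.
rewrite move_part_id ?F_out ?(ltn_trans lt_Mb) // neq_ltn ?lt_bi ?orbT //.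
by rewrite (ltn_trans lt_ab lt_bi) orbT.
Qed.

Section Multiplicities.
Variable N : nat.
Implicit Types (f : mpart N) (F : nat -> nat).

Definition mult f (i : nat) : nat := if i < N.+1 then nat_of_ord (f (inord i)) else 0.

Definition of_mult F : mpart N := [ffun i : 'I_N.+1 => inord (F i)].

Lemma mult_ord f (i : 'I_N.+1) : mult f i = f i.
Proof. by rewrite /mult ltn_ord inord_val. Qed.

Lemma mult_out f i : N < i -> mult f i = 0.
Proof. by move=> lt_Ni; rewrite /mult ltnS leqNgt lt_Ni. Qed.

Lemma mult_le f i : mult f i <= N.
Proof. by rewrite /mult; case: ifP => // _; exact: leq_ord. Qed.

Lemma mult_gt0_le f i : 0 < mult f i -> i <= N.
Proof. by case: (leqP i N) => // /(mult_out f) ->. Qed.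

Lemma of_mult_mult f F : F =1 mult f -> of_mult F = f.
Proof. by move=> Ff; apply/ffunP => i; rewrite ffunE Ff mult_ord inord_val. Qed.

Lemma mult_of_mult F : (forall i, F i <= N) -> (forall i, N < i -> F i = 0) ->
  mult (of_mult F) =1 F.
Proof.
move=> F_le F_out i; rewrite /mult; case: ltnP => [lt_iN | /F_out //].
by rewrite ffunE !inordK ?ltnS ?F_le.
Qed.

Definition min_part f : nat :=
  if [pick s | is_smallest f s] is Some s then val s else 0.

Lemma is_smallestP f (s : 'I_N.+1) : is_smallest f s <-> smallest_part (mult f) s.
Proof.
rewrite /is_smallest /smallest_part mult_ord; split.
  case/andP=> fs /forallP min_s; split=> // i lt_is.
  have lt_iN : i < N.+1 by apply: ltn_trans lt_is (ltn_ord s).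
  by have /implyP/(_ _)/eqP := min_s (Ordinal lt_iN); rewrite -mult_ord; apply.
case=> -> min_s; apply/forallP => i; apply/implyP => lt_is.
by rewrite -mult_ord min_s.
Qed.

Lemma is_largestP f (t : 'I_N.+1) : is_largest f t <-> largest_part (mult f) t.
Proof.
rewrite /is_largest /largest_part mult_ord; split.
  case/andP=> ft /forallP max_t; split=> // i lt_ti.
  case: (leqP i N) => [le_iN | /(mult_out f) //].
  by have /implyP/(_ _)/eqP := max_t (Ordinal (le_iN : i < N.+1)); rewrite -mult_ord; apply.
case=> -> max_t; apply/forallP => i; apply/implyP => lt_ti.
by rewrite -mult_ord max_t.
Qed.

Lemma min_partE f s : smallest_part (mult f) s -> min_part f = s.
Proof.
move=> min_s; have le_sN := mult_gt0_le min_s.1.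
rewrite /min_part; case: pickP => [s' /is_smallestP min_s' | none].
  exact: smallest_part_uniq min_s' min_s.
have min_so : is_smallest f (Ordinal (le_sN : s < N.+1)) by apply/is_smallestP.
by rewrite none in min_so.
Qed.

Lemma smallest_mult_geP m f :
  smallest_mult_ge m f <-> exists s, smallest_part (mult f) s /\ m <= mult f s.
Proof.
split=> [/existsP[s /andP[/is_smallestP min_s le_m]] | [s [min_s le_m]]].
  by exists s; rewrite mult_ord.
have le_sN := mult_gt0_le min_s.1.
apply/existsP; exists (Ordinal (le_sN : s < N.+1)).
by rewrite -mult_ord le_m andbT; apply/is_smallestP.
Qed.

Lemma spread_eqP j f :
  spread_eq j f <->
  exists s t, [/\ smallest_part (mult f) s, largest_part (mult f) t & t - s = j].
Proof.
split=> [/existsP[s /existsP[t /and3P[/is_smallestP min_s /is_largestP max_t /eqP]]]|].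
  by exists s, t.
case=> s [t [min_s max_t ts]].
have le_sN := mult_gt0_le min_s.1; have le_tN := mult_gt0_le max_t.1.
apply/existsP; exists (Ordinal (le_sN : s < N.+1)).
apply/existsP; exists (Ordinal (le_tN : t < N.+1)).
by apply/and3P; split; [apply/is_smallestP | apply/is_largestP | apply/eqP].
Qed.

Lemma regularP l f : regular l f <-> forall i, 0 < mult f i -> ~~ (l %| i).
Proof.
split=> [/forallP reg i fi | reg]; last first.
  by apply/forallP => i; apply/implyP; rewrite -mult_ord; apply: reg.
have le_iN := mult_gt0_le fi.
by have := reg (Ordinal (le_iN : i < N.+1)); rewrite -mult_ord fi.
Qed.

Lemma is_partitionE f :
  is_partition f = (mult f 0 == 0) && (weight N.+1 (mult f) == N).
Proof.
rewrite /is_partition -(mult_ord f ord0) /weight.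
by under [in RHS]eq_bigr => i _ do rewrite mult_ord.
Qed.

End Multiplicities.

Definition grow n L (f : mpart n) : mpart (n + L) :=
  of_mult (n + L) (move_part (mult f) (min_part f) (min_part f + L)).

Definition shrink n L (g : mpart (n + L)) : mpart n :=
  of_mult n (move_part (mult g) (min_part g + L) (min_part g)).

Lemma grow_spec m l n L (f : mpart n) : 1 < m -> l %| L -> n < L ->
  [&& is_partition f, regular l f & smallest_mult_ge m f] ->
  [&& is_partition (grow L f), regular l (grow L f), smallest_mult_ge m.-1 (grow L f)
    & spread_eq L (grow L f)] /\ shrink (grow L f) = f.
Proof.
move=> lt1m dvd_lL lt_nL /and3P[]; rewrite is_partitionE => /andP[/eqP f0 /eqP wf].
move=> /regularP reg_f /smallest_mult_geP[s [min_s le_m]].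
have le_sn := mult_gt0_le min_s.1.
have lt_sL : s < s + L by lia.
have s_gt0 : 0 < s by rewrite lt0n; apply: contraTneq min_s.1 => ->; rewrite f0.
set F := mult f in f0 wf reg_f min_s le_m.
set G := move_part F s (s + L).
have gG : mult (grow L f) =1 G.
  rewrite /grow (min_partE min_s); apply: mult_of_mult => [i | i lt_i].
    by apply: leq_trans (move_part_le _ _ _ _) _; have := mult_le f i; lia.
  by rewrite /G move_part_id ?mult_out //; apply/eqP; lia.
have min_G : smallest_part G s by apply: smallest_part_move_up min_s _ lt_sL; lia.
have max_G : largest_part G (s + L) := largest_part_move_up (mult_out f) lt_sL (ltn_addl s lt_nL).
have neq_s : s != s + L by rewrite neq_ltn lt_sL.
split; last first.
  rewrite /shrink (min_partE (eq_smallest_part (fsym gG) min_G)).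
  by apply: of_mult_mult => i; rewrite -/F -(move_partK (s + L) min_s.1 i) /move_part gG.
apply/and4P; split.
- have G0 : G 0 = 0 by rewrite /G move_part_id //; apply/eqP; lia.
  rewrite is_partitionE gG G0 eqxx (eq_weight _ gG); apply/eqP.
  have [lt_s lt_sL'] : s < (n + L).+1 /\ s + L < (n + L).+1 by lia.
  have wF : weight (n + L).+1 F = n.
    by rewrite (weight_widen (M := n)) ?ltnS ?leq_addr // => i /(mult_out f).
  by have := weight_move_part min_s.1 lt_s lt_sL'; rewrite -/G wF; lia.
- apply/regularP => i; rewrite gG => /move_part_gt0[-> | /reg_f //].
  by rewrite dvdn_addl // reg_f // min_s.1.
- apply/smallest_mult_geP; exists s; split; first exact: eq_smallest_part (fsym gG) min_G.
  by rewrite gG /G move_part_src //; lia.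
- apply/spread_eqP; exists s, (s + L); split; last by lia.
    exact: eq_smallest_part (fsym gG) min_G.
  exact: eq_largest_part (fsym gG) max_G.
Qed.

Lemma shrink_spec m l n L (g : mpart (n + L)) : 0 < L ->
  [&& is_partition g, regular l g, smallest_mult_ge m.-1 g & spread_eq L g] ->
  [&& is_partition (shrink g), regular l (shrink g) & smallest_mult_ge m (shrink g)]
  /\ grow L (shrink g) = g.
Proof.
move=> L_gt0 /and4P[]; rewrite is_partitionE => /andP[/eqP g0 /eqP wg].
move=> /regularP reg_g /smallest_mult_geP[s [min_s le_m]].
move=> /spread_eqP[s' [t [min_s' max_t ts]]].
have eq_s's := smallest_part_uniq min_s' min_s; subst s'.
have eq_t : t = s + L by lia.
subst t; have le_sLnL := mult_gt0_le max_t.1.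
have lt_sL : s < s + L by lia.
have s_gt0 : 0 < s by rewrite lt0n; apply: contraTneq min_s.1 => ->; rewrite g0.
set G := mult g in g0 wg reg_g min_s le_m max_t.
set F := move_part G (s + L) s.
have neq_s : s + L != s by rewrite neq_ltn lt_sL orbT.
have F0 : F 0 = 0 by rewrite /F move_part_id //; apply/eqP; lia.
have wF : weight (n + L).+1 F = n.
  have [lt_s lt_sL'] : s < (n + L).+1 /\ s + L < (n + L).+1 by lia.
  by have := weight_move_part max_t.1 lt_sL' lt_s; rewrite -/F wg; lia.
have F_le i : i * F i <= n.
  rewrite -wF; apply: term_le_weight => j lt_j.
  by rewrite /F move_part_id; [exact: mult_out | apply/eqP; lia..].
have F_out i : n < i -> F i = 0 by have := F_le i; nia.
have fF : mult (shrink g) =1 F.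
  rewrite /shrink (min_partE min_s) -/G -/F; apply: mult_of_mult => // i.
  by case: (posnP i) => [-> | i_gt0]; [rewrite F0 | have := F_le i; nia].
have min_F : smallest_part F s := smallest_part_move_down min_s lt_sL.
split; last first.
  rewrite /grow (min_partE (eq_smallest_part (fsym fF) min_F)).
  by apply: of_mult_mult => i; rewrite -/G -(move_partK s max_t.1 i) /move_part fF.
apply/and3P; split.
- rewrite is_partitionE fF F0 eqxx (eq_weight _ fF) -[X in _ == X]wF /=.
  by rewrite (weight_widen (M := n)) ?ltnS ?leq_addr.
- apply/regularP => i; rewrite fF => /move_part_gt0[-> | /reg_g //].
  exact: reg_g min_s.1.
- apply/smallest_mult_geP; exists s; split; first exact: eq_smallest_part (fsym fF) min_F.
  by rewrite fF /F move_part_dst //; lia.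
Qed.

Lemma card_in_bij (T T' : finType) (A : {set T}) (B : {set T'}) (f : T -> T') (g : T' -> T) :
  {in A, forall x, f x \in B} -> {in B, forall y, g y \in A} ->
  {in A, cancel f g} -> {in B, cancel g f} -> #|A| = #|B|.
Proof.
move=> fAB gBA fK gK; rewrite -(card_in_imset (can_in_inj fK)).
apply: eq_card => y; apply/imsetP/idP => [[x Ax ->] | By]; first exact: fAB.
by exists (g y); rewrite ?gK ?gBA.
Qed.

Lemma a_ml_grow m l n L : 1 < m -> l %| L -> n < L ->
  a_ml m l n = a_ml2 m.-1 l (n + L) L.
Proof.
move=> lt1m dvd_lL lt_nL; have L_gt0 : 0 < L by lia.
apply: (card_in_bij (f := @grow n L) (g := @shrink n L)) => x; rewrite !inE => x_in.
- by case: (grow_spec lt1m dvd_lL lt_nL x_in).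
- by case: (shrink_spec L_gt0 x_in).
- by case: (grow_spec lt1m dvd_lL lt_nL x_in).
- by case: (shrink_spec L_gt0 x_in).
Qed.

Lemma a_ml2_1 l N j : a_ml2 1 l N j = b_l l N j.
Proof.
apply: eq_card => f; rewrite !inE; apply: andb_id2l => _; apply: andb_id2l => _.
case spread_f: (spread_eq j f); rewrite ?andbF ?andbT //.
have /spread_eqP[s [_ [min_s _ _]]] := spread_f.
by apply/smallest_mult_geP; exists s; split; last exact: min_s.1.
Qed.

Theorem theorem5p6 :
  (forall n : nat, 1 <= n -> odd n -> a_ml 2 2 n = b_l 2 (2 * n + 1) (n + 1))
  /\
  (forall m l n k r : nat, 2 <= m -> 2 <= l -> 1 <= n -> ~~ (l %| n) ->
     n = l * k + r -> 1 <= r < l ->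
     a_ml m l n = a_ml2 (m - 1) l (2 * n + l - r) (n + l - r)).
Proof.
have general m l n k r : 2 <= m -> 2 <= l -> 1 <= n -> ~~ (l %| n) ->
    n = l * k + r -> 1 <= r < l ->
    a_ml m l n = a_ml2 (m - 1) l (2 * n + l - r) (n + l - r).
  move=> le2m _ _ _ def_n /andP[r_gt0 lt_rl].
  have -> : 2 * n + l - r = n + (n + l - r) by lia.
  rewrite subn1; apply: a_ml_grow => //; last by lia.
  by apply/dvdnP; exists k.+1; lia.
split=> // n n_gt0 odd_n.
rewrite (general 2 2 n n./2 1) ?dvdn2 ?odd_n //; last first.
  by rewrite -{1}(odd_double_half n) odd_n -mul2n addnC.
by rewrite -a_ml2_1; congr a_ml2; lia.
Qed.
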